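(* Let $\mathcal M=(M,<,+,0,\ldots)$ be a definably complete locally o-minimal expansion of an ordered group. Let $(G,\tau)$ be a definable topological group having the definable curve selection property, $U$ a definable neighborhood of the identity $e$ in $G$, and $C$ a definably compact definable subset of $G$. Then $\bigcap_{h\in C}hUh^{-1}$ is a neighborhood of $e$.
   Context: ''Definable'' means definable in $\mathcal M$ with parameters. $\mathcal M$ is an expansion of an ordered group with dense order without endpoints; locally o-minimal: for every definable $Y\subseteq M$ and $a\in M$ there is an open interval $I\ni a$ with $Y\cap I$ a finite union of points and open intervals; definably complete: every definable subset of $M$ has sup and inf in $M\cup\{\pm\infty\}$. A definable topological group is a definable group with a topology having a definable open base in which multiplication and inversion are continuous. A definable subset is definably compact if, with the relative topology, every definable filtered family (any two members contain a common member) of nonempty closed subsets has nonempty intersection. A definable curve is a definable, not necessarily continuous, map from an open interval; for $\gamma:(a,b)\to X$, $\operatorname{Conv}_{\mathrm{left}}(\gamma)$ is the set of $x$ such that for every $t\in(a,b)$ and every definable neighborhood $A$ of $x$, $\gamma((a,t))\cap A\ne\emptyset$. A definable topological space $(X,\tau)$ has the definable curve selection property if for every definable $D\subseteq X$ and every $x$ in the frontier $\partial_\tau D$ there is a definable curve $\gamma:(a,b)\to D$ with $a\in M$ and $x\in\operatorname{Conv}_{\mathrm{left}}(\gamma)$. *)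

(* A first-order expansion of an ordered group is
   represented, as in van den Dries' "Tame topology and o-minimal structures",
   by the collection of all its (parameter-)definable sets. *)
From Stdlib Require List.
From mathcomp Require Import all_boot.

Set Implicit Arguments.
Unset Strict Implicit.
Unset Printing Implicit Defensive.

Record ordered_group := OrderedGroup {
  og_car :> Type;
  og_lt : og_car -> og_car -> Prop;
  og_add : og_car -> og_car -> og_car;
  og_zero : og_car;
  og_opp : og_car -> og_car;
  og_ltirr : forall x, ~ og_lt x x;
  og_lttrans : forall x y z, og_lt x y -> og_lt y z -> og_lt x z;
  og_lttotal : forall x y, og_lt x y \/ x = y \/ og_lt y x;
  og_addA : forall x y z, og_add x (og_add y z) = og_add (og_add x y) z;
  og_add0x : forall x, og_add og_zero x = x;
  og_addx0 : forall x, og_add x og_zero = x;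
  og_addNx : forall x, og_add (og_opp x) x = og_zero;
  og_addxN : forall x, og_add x (og_opp x) = og_zero;
  og_ltaddl : forall x y z, og_lt x y -> og_lt (og_add z x) (og_add z y);
  og_ltaddr : forall x y z, og_lt x y -> og_lt (og_add x z) (og_add y z);
  og_dense : forall x y, og_lt x y -> exists z, og_lt x z /\ og_lt z y;
  og_noleft : forall x, exists y, og_lt y x;
  og_noright : forall x, exists y, og_lt x y
}.

Section Defs.
Variable M : ordered_group.

Definition lt := @og_lt M.
Definition le (x y : M) := lt x y \/ x = y.

Definition pt (n : nat) := 'I_n -> M.
Definition rset (n : nat) := pt n -> Prop.

Definition pcat (n m : nat) (x : pt n) (y : pt m) : pt (n + m) :=
  fun i => match split i with inl j => x j | inr j => y j end.

Definition pt1 (t : M) : pt 1 := fun _ => t.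

Definition i2_0 : 'I_2 := @Ordinal 2 0 isT.
Definition i2_1 : 'I_2 := @Ordinal 2 1 isT.
Definition i3_0 : 'I_3 := @Ordinal 3 0 isT.
Definition i3_1 : 'I_3 := @Ordinal 3 1 isT.
Definition i3_2 : 'I_3 := @Ordinal 3 2 isT.

Record expansion := Expansion {
  def : forall n, rset n -> Prop;
  def_T : forall n, def (fun _ : pt n => True);
  def_compl : forall n (A : rset n), def A -> def (fun x => ~ A x);
  def_inter : forall n (A B : rset n), def A -> def B -> def (fun x => A x /\ B x);
  (* preimages under coordinate maps x |-> x o f (products with M,
     permutations and identifications of coordinates) *)
  def_preim : forall m n (f : 'I_m -> 'I_n) (A : rset m),
      def A -> def (fun x : pt n => A (fun i => x (f i)));
  def_image : forall m n (f : 'I_m -> 'I_n) (A : rset n),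
      def A -> def (fun y : pt m => exists x, A x /\ forall i, y i = x (f i));
  def_diag : def (fun x : pt 2 => x i2_0 = x i2_1);
  def_point : forall c : M, def (fun x : pt 1 => x ord0 = c);
  def_lt : def (fun x : pt 2 => lt (x i2_0) (x i2_1));
  def_add : def (fun x : pt 3 => x i3_2 = og_add (x i3_0) (x i3_1))
}.

Variable D : expansion.
Definition definable n (A : rset n) := def D A.

Definition locally_o_minimal : Prop :=
  forall (Y : rset 1), definable Y -> forall a : M,
    exists c d : M, lt c a /\ lt a d /\
      exists (ps : list M) (ivs : list (M * M)),
        forall y : M, (Y (pt1 y) /\ lt c y /\ lt y d) <->
          (List.In y ps \/ exists p, List.In p ivs /\ lt p.1 y /\ lt y p.2).

Inductive ext := minf | fin of M | pinf.
Definition ext_le (x y : ext) : Prop :=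
  match x, y with
  | minf, _ => True
  | _, pinf => True
  | fin a, fin b => le a b
  | _, _ => False
  end.

Definition has_sup (Y : M -> Prop) : Prop :=
  exists s : ext, (forall y, Y y -> ext_le (fin y) s) /\
    (forall u : ext, (forall y, Y y -> ext_le (fin y) u) -> ext_le s u).
Definition has_inf (Y : M -> Prop) : Prop :=
  exists s : ext, (forall y, Y y -> ext_le s (fin y)) /\
    (forall u : ext, (forall y, Y y -> ext_le u (fin y)) -> ext_le u s).

Definition definably_complete : Prop :=
  forall (Y : rset 1), definable Y ->
    has_sup (fun y => Y (pt1 y)) /\ has_inf (fun y => Y (pt1 y)).

Section TopGroup.
Variables (n : nat) (G : rset n).
Variables (mul : pt n -> pt n -> pt n) (inv : pt n -> pt n) (e : pt n).
(* the open base {B t | T t}, indexed by a rsubset T of M^k *)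
Variables (k : nat) (T : rset k) (B : pt k -> rset n).

Definition rsubset m (A A' : rset m) := forall x, A x -> A' x.

Definition is_group : Prop :=
  G e /\
  (forall x y, G x -> G y -> G (mul x y)) /\
  (forall x, G x -> G (inv x)) /\
  (forall x y z, G x -> G y -> G z -> mul x (mul y z) = mul (mul x y) z) /\
  (forall x, G x -> mul e x = x /\ mul x e = x) /\
  (forall x, G x -> mul (inv x) x = e /\ mul x (inv x) = e).

Definition definable_group : Prop :=
  is_group /\ definable G /\
  definable (fun z : pt ((n + n) + n) =>
     exists x y, G x /\ G y /\ z = pcat (pcat x y) (mul x y)) /\
  definable (fun z : pt (n + n) => exists x, G x /\ z = pcat x (inv x)).

Definition definable_base : Prop :=
  definable T /\
  definable (fun z : pt (n + k) => exists x t, T t /\ B t x /\ z = pcat x t) /\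
  (forall t, T t -> rsubset (B t) G) /\
  (forall x, G x -> exists t, T t /\ B t x) /\
  (forall t1 t2 x, T t1 -> T t2 -> B t1 x -> B t2 x ->
     exists t3, T t3 /\ B t3 x /\ rsubset (B t3) (fun y => B t1 y /\ B t2 y)).

Definition is_open (V : rset n) : Prop :=
  rsubset V G /\ forall x, V x -> exists t, T t /\ B t x /\ rsubset (B t) V.

Definition is_nbhd (x : pt n) (A : rset n) : Prop :=
  rsubset A G /\ exists V, is_open V /\ V x /\ rsubset V A.

Definition definable_topological_group : Prop :=
  definable_group /\ definable_base /\
  (forall x y, G x -> G y -> forall W, is_open W -> W (mul x y) ->
     exists V1 V2, is_open V1 /\ is_open V2 /\ V1 x /\ V2 y /\
       forall a b, V1 a -> V2 b -> W (mul a b)) /\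
  (forall x, G x -> forall W, is_open W -> W (inv x) ->
     exists V, is_open V /\ V x /\ forall a, V a -> W (inv a)).

Definition closure (A : rset n) : rset n :=
  fun x => G x /\ forall V, is_open V -> V x -> exists y, V y /\ A y.
Definition frontier (A : rset n) : rset n :=
  fun x => closure A x /\ ~ A x.

Definition rel_closed (C F : rset n) : Prop :=
  rsubset F C /\
  forall x, C x -> ~ F x -> exists V, is_open V /\ V x /\
     forall y, V y -> C y -> ~ F y.

Definition definably_compact (C : rset n) : Prop :=
  forall (j : nat) (S : rset j) (F : pt j -> rset n),
    definable S ->
    definable (fun z : pt (n + j) => exists x s, S s /\ F s x /\ z = pcat x s) ->
    (exists s, S s) ->
    (forall s, S s -> rel_closed C (F s) /\ exists x, F s x) ->
    (forall s1 s2, S s1 -> S s2 -> exists s3, S s3 /\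
        rsubset (F s3) (fun x => F s1 x /\ F s2 x)) ->
    exists x, C x /\ forall s, S s -> F s x.

(* open intervals (a, b) with a in M and b in M u {+oo} *)
Definition in_interval (a : M) (b : option M) (t : M) : Prop :=
  lt a t /\ match b with Some b' => lt t b' | None => True end.

Definition conv_left (a : M) (b : option M) (gamma : M -> pt n) : rset n :=
  fun x => G x /\ forall t, in_interval a b t ->
    forall A, definable A -> is_nbhd x A ->
      exists s, lt a s /\ lt s t /\ A (gamma s).

Definition curve_selection : Prop :=
  forall (Dset : rset n), definable Dset -> rsubset Dset G ->
  forall x, frontier Dset x ->
    exists (a : M) (b : option M) (gamma : M -> pt n),
      (match b with Some b' => lt a b' | None => True end) /\
      definable (fun z : pt (1 + n) =>
          exists t, in_interval a b t /\ z = pcat (pt1 t) (gamma t)) /\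
      (forall t, in_interval a b t -> Dset (gamma t)) /\
      conv_left a b gamma x.

End TopGroup.
End Defs.

(* If no basic neighbourhood B of e satisfies h^-1 B h ⊆ U for all h ∈ C,
   then for each basic B ∋ e the points of C adherent to
   {g ∈ C | g^-1 B g ⊄ U} form a nonempty, relatively closed, definable
   family of subsets of C, filtered because the basic neighbourhoods of e
   are.  Definable compactness gives h0 in all of them, contradicting the
   continuity of (g, x) ↦ g^-1 x g at (h0, e). *)

From Pilot Require Import Defs.
From mathcomp Require Import all_boot.
From Stdlib Require Import Classical FunctionalExtensionality PropExtensionality.

Set Implicit Arguments.
Unset Strict Implicit.
Unset Printing Implicit Defensive.

Local Notation L := (lshift _).
Local Notation R := (@rshift _ _).

Section Tuples.
Variable M : ordered_group.

Lemma pcatL a b (x : pt M a) (y : pt M b) : pcat x y \o L = x.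
Proof.
apply: functional_extensionality => i; rewrite /comp /pcat.
by have /= -> := @unsplitK a b (inl i).
Qed.

Lemma pcatR a b (x : pt M a) (y : pt M b) : pcat x y \o R = y.
Proof.
apply: functional_extensionality => i; rewrite /comp /pcat.
by have /= -> := @unsplitK a b (inr i).
Qed.

Lemma pcat_split a b (w : pt M (a + b)) : pcat (w \o L) (w \o R) = w.
Proof.
apply: functional_extensionality => i; rewrite /comp /pcat.
by case: split_ordP => j ->.
Qed.

Lemma pcat_inj a b (x x' : pt M a) (y y' : pt M b) :
  pcat x y = pcat x' y' -> x = x' /\ y = y'.
Proof.
by move=> E; split; [rewrite -(pcatL x y) E pcatL | rewrite -(pcatR x y) E pcatR].
Qed.

End Tuples.

Section Definability.
Variables (M : ordered_group) (D : expansion M).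

Lemma definable_ext n (A A' : rset M n) :
  definable D A -> (forall x, A x <-> A' x) -> definable D A'.
Proof.
move=> hA AE; suff <- : A = A' by [].
by apply: functional_extensionality => x; apply: propositional_extensionality.
Qed.

Lemma definable_imp n (A A' : rset M n) :
  definable D A -> definable D A' -> definable D (fun x => A x -> A' x).
Proof.
move=> hA hA'; apply: definable_ext (def_compl (def_inter hA (def_compl hA'))) _.
by move=> x; split=> [nAA' Ax | AA' [/AA']//]; apply: NNPP => nA'; apply: nAA'.
Qed.

Lemma definable_preim a N (A : rset M a) (f : 'I_a -> 'I_N) :
  definable D A -> definable D (fun w : pt M N => A (w \o f)).
Proof. exact: def_preim. Qed.

Lemma definable_preim2 a b N (A : rset M (a + b))
    (f1 : 'I_a -> 'I_N) (f2 : 'I_b -> 'I_N) :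
  definable D A -> definable D (fun w : pt M N => A (pcat (w \o f1) (w \o f2))).
Proof.
pose f i := match split i with inl j => f1 j | inr j => f2 j end.
move=> hA; apply: definable_ext (definable_preim f hA) _ => w.
suff -> : pcat (w \o f1) (w \o f2) = w \o f by [].
by apply: functional_extensionality => i; rewrite /comp /pcat /f; case: split.
Qed.

Lemma definable_exists m p (A : rset M (m + p)) :
  definable D A -> definable D (fun y : pt M m => exists x, A (pcat y x)).
Proof.
move=> hA; apply: definable_ext (def_image L hA) _ => y; split.
  move=> [z [Az yE]]; exists (z \o R).
  suff -> : y = z \o L by rewrite pcat_split.
  by apply: functional_extensionality => i; rewrite yE.
by move=> [x Ax]; exists (pcat y x); split=> // i; rewrite -[in LHS](pcatL y x).
Qed.

Lemma definable_forall m p (A : rset M (m + p)) :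
  definable D A -> definable D (fun y : pt M m => forall x, A (pcat y x)).
Proof.
move=> hA; apply: definable_ext (def_compl (definable_exists (def_compl hA))) _.
by move=> y; split=> [nE x | AA [x]//]; apply: NNPP => nA; apply: nE; exists x.
Qed.

Lemma definable_all_fin m N (P : 'I_m -> rset M N) :
  (forall i, definable D (P i)) -> definable D (fun x => forall i, P i x).
Proof.
move=> hP.
have hS (s : seq 'I_m) : definable D (fun x => forall i, i \in s -> P i x).
  elim: s => [|i s IH].
    by apply: definable_ext (def_T D N) _ => x.
  apply: definable_ext (def_inter (hP i) IH) _ => x; split.
    by move=> [Pi Ps] j; rewrite in_cons => /predU1P [-> | /Ps].
  by move=> Ps; split=> [|j js]; apply: Ps; rewrite in_cons ?eqxx ?js ?orbT.
apply: definable_ext (hS (enum 'I_m)) _ => x.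
by split=> Px i => [|_]; apply: Px; rewrite ?mem_enum.
Qed.

Lemma definable_eq_coord N (i j : 'I_N) : definable D (fun w : pt M N => w i = w j).
Proof.
pose f (l : 'I_2) := if l == i2_0 then i else j.
by apply: definable_ext (def_preim f (def_diag D)) _.
Qed.

Lemma definable_eq_pt N (c : pt M N) : definable D (fun w : pt M N => w = c).
Proof.
have hc (i : 'I_N) : definable D (fun w : pt M N => w i = c i).
  by apply: definable_ext (def_preim (fun _ : 'I_1 => i) (def_point D (c i))) _.
apply: definable_ext (definable_all_fin hc) _ => w.
by split=> [wc | -> //]; apply: functional_extensionality.
Qed.

(* The shape in which [definable_base] and [definably_compact] require a
   family of sets to be definable. *)
Definition family n j (S : rset M j) (F : pt M j -> rset M n) : rset M (n + j) :=
  fun z => exists x s, S s /\ F s x /\ z = pcat x s.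

Lemma family_pcat n j (S : rset M j) (F : pt M j -> rset M n) x s :
  family S F (pcat x s) <-> S s /\ F s x.
Proof.
split=> [[x' [s' [Ss [Fx /pcat_inj [-> ->]]]]] // | [Ss Fx]].
by exists x, s.
Qed.

Lemma definable_family n j (S : rset M j) (F : pt M j -> rset M n) :
  definable D (fun z : pt M (n + j) => S (z \o R) /\ F (z \o R) (z \o L)) ->
  definable D (family S F).
Proof.
move=> hSF; apply: definable_ext hSF _ => z.
by rewrite -[in X in _ <-> X](pcat_split z) family_pcat.
Qed.

Lemma definable_family_inter n j (S : rset M j) (F : pt M j -> rset M n)
    (C : rset M n) :
  definable D C -> definable D (family S F) ->
  definable D (family S (fun s x => C x /\ F s x)).
Proof.
move=> hC hF; apply: definable_family.
apply: definable_ext (def_inter (definable_preim L hC) hF) _ => z.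
by rewrite -{2}(pcat_split z) family_pcat; split=> -[? []].
Qed.

Definition graph a b (Dom : rset M a) (f : pt M a -> pt M b) : rset M (a + b) :=
  fun z => exists x, Dom x /\ z = pcat x (f x).

Definition definable_map a b (Dom : rset M a) (f : pt M a -> pt M b) :=
  definable D (graph Dom f).

Lemma graph_pcat a b (Dom : rset M a) (f : pt M a -> pt M b) x y :
  graph Dom f (pcat x y) <-> Dom x /\ y = f x.
Proof.
by split=> [[x' [Dx' /pcat_inj [-> ->]]] // | [Dx ->]]; exists x.
Qed.

Lemma definable_map_preim a b (Dom : rset M a) (f : pt M a -> pt M b)
    (A : rset M b) :
  definable_map Dom f -> definable D A -> definable D (fun x => Dom x /\ A (f x)).
Proof.
move=> hf hA.
apply: definable_ext (definable_exists (def_inter hf (definable_preim R hA))) _ => x.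
split=> [[y []] | [Dx Afx]]; last by exists (f x); rewrite graph_pcat pcatR.
by rewrite graph_pcat pcatR => -[Dx ->].
Qed.

Lemma definable_map_ext a b (Dom : rset M a) (f g : pt M a -> pt M b) :
  definable_map Dom f -> (forall x, Dom x -> f x = g x) -> definable_map Dom g.
Proof.
move=> hf fg; apply: definable_ext hf _ => z.
by rewrite -(pcat_split z) !graph_pcat; split=> -[Dx ->]; rewrite fg.
Qed.

Lemma definable_map_proj a b (Dom : rset M a) (p : 'I_b -> 'I_a) :
  definable D Dom -> definable_map Dom (fun x => x \o p).
Proof.
move=> hDom.
have hE : definable D (fun z : pt M (a + b) => forall i, z (R i) = z (L (p i))).
  by apply: definable_all_fin => i; apply: definable_eq_coord.
apply: definable_ext (def_inter (definable_preim L hDom) hE) _ => z.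
rewrite -[in X in _ <-> X](pcat_split z) graph_pcat; split.
  by move=> [Dz zE]; split=> //; apply: functional_extensionality.
by move=> [Dz zE]; split=> // i; apply: (congr1 (fun f => f i) zE).
Qed.

Lemma definable_map_comp a b c (Dom : rset M a) (Dom' : rset M b)
    (f : pt M a -> pt M b) (g : pt M b -> pt M c) :
  definable_map Dom f -> definable_map Dom' g ->
  (forall x, Dom x -> Dom' (f x)) -> definable_map Dom (fun x => g (f x)).
Proof.
move=> hf hg fDom.
have := definable_exists (def_inter (definable_preim2 (L \o L) R hf)
                                    (definable_preim2 R (L \o R) hg)).
move/definable_ext; apply=> z; rewrite -[in X in _ <-> X](pcat_split z) graph_pcat.
split=> [[y] | [Dx zE]].
  by rewrite !compA !pcatL !pcatR !graph_pcat => -[[Dx ->] [_ ->]].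
exists (f (z \o L)); rewrite !compA !pcatL !pcatR !graph_pcat.
by split; split=> //; apply: fDom.
Qed.

Lemma definable_map_pair a b c (Dom : rset M a)
    (f : pt M a -> pt M b) (g : pt M a -> pt M c) :
  definable_map Dom f -> definable_map Dom g ->
  definable_map Dom (fun x => pcat (f x) (g x)).
Proof.
move=> hf hg.
have := def_inter (definable_preim2 L (R \o L) hf) (definable_preim2 L (R \o R) hg).
move/definable_ext; apply=> z; rewrite -(pcat_split z) !compA !pcatL !pcatR.
rewrite -[z \o R in X in _ <-> X]pcat_split !graph_pcat.
by split=> [[[Dx ->] [_ ->]] | [Dx /pcat_inj [-> ->]]].
Qed.

End Definability.

Section Topology.
Variables (M : ordered_group) (D : expansion M) (n k : nat).
Variables (G : rset M n) (T : rset M k) (B : pt M k -> rset M n).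
Hypothesis basic_subset : forall t, T t -> rsubset (B t) G.
Hypothesis basic_inter : forall t1 t2 x, T t1 -> T t2 -> B t1 x -> B t2 x ->
  exists t3, T t3 /\ B t3 x /\ rsubset (B t3) (fun y => B t1 y /\ B t2 y).

Local Notation is_open := (is_open G T B).
(* Unqualified, [closure] would resolve to the one of fingraph. *)
Local Notation closure := (Defs.closure G T B).

Lemma is_open_basic t : T t -> is_open (B t).
Proof.
move=> Tt; split=> [|x Bx]; first exact: basic_subset.
have [t' [Tt' [Bt' sub]]] := basic_inter Tt Tt Bx Bx.
by exists t'; do 2!split=> //; move=> y /sub [].
Qed.

Lemma is_open_inter V1 V2 :
  is_open V1 -> is_open V2 -> is_open (fun x => V1 x /\ V2 x).
Proof.
move=> [V1G oV1] [V2G oV2]; split=> [x [/V1G] //| x [V1x V2x]].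
have [t1 [T1 [B1 sub1]]] := oV1 x V1x; have [t2 [T2 [B2 sub2]]] := oV2 x V2x.
have [t3 [T3 [B3 sub3]]] := basic_inter T1 T2 B1 B2.
by exists t3; do 2!split=> //; move=> y /sub3 [/sub1 ? /sub2 ?].
Qed.

Lemma closure_subset (A : rset M n) : rsubset A G -> rsubset A (closure A).
Proof. by move=> AG x Ax; split=> [|V _ Vx]; [exact: AG | exists x]. Qed.

Lemma closureS (A A' : rset M n) :
  rsubset A A' -> rsubset (closure A) (closure A').
Proof.
move=> AA' x [Gx clx]; split=> // V oV Vx.
by have [y [Vy /AA' A'y]] := clx V oV Vx; exists y.
Qed.

Lemma closure_basicE (A : rset M n) x : closure A x <->
  G x /\ forall t, T t -> B t x -> exists y, B t y /\ A y.
Proof.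
split=> -[Gx clx]; split=> //.
  by move=> t Tt Bx; apply: clx (is_open_basic Tt) Bx.
move=> V [_ oV] Vx; have [t [Tt [Bx BV]]] := oV x Vx.
by have [y [By Ay]] := clx t Tt Bx; exists y; split=> //; apply: BV.
Qed.

Lemma rel_closed_closure (C A : rset M n) :
  rsubset C G -> rel_closed G T B C (fun x => C x /\ closure A x).
Proof.
move=> CG; split=> [x [] // | x Cx nclx].
have [V [oV [Vx VA]]] : exists V, is_open V /\ V x /\ forall y, V y -> ~ A y.
  apply: NNPP => nV; apply: nclx; split=> //; split=> [|W oW Wx]; first exact: CG.
  apply: NNPP => nW; apply: nV; exists W; do 2!split=> //.
  by move=> y Wy Ay; apply: nW; exists y.
exists V; do 2!split=> //; move=> y Vy _ [_ [_ cly]].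
by have [z [Vz Az]] := cly V oV Vy; exact: VA z Vz Az.
Qed.

Hypothesis def_basic : definable D (family T B).

Lemma definable_basic_at x : definable D (fun t => T t /\ B t x).
Proof.
apply: definable_ext (definable_exists (def_inter (definable_preim2 R L def_basic)
                        (definable_preim R (definable_eq_pt D x)))) _ => t.
split=> [[y] | Bt]; last by exists x; rewrite pcatL pcatR family_pcat.
by rewrite pcatL pcatR family_pcat => -[Bt <-].
Qed.

Lemma definable_closure_family j (S : rset M j) (A : pt M j -> rset M n) :
  definable D G -> definable D S -> definable D (family S A) ->
  definable D (family S (fun s => closure (A s))).
Proof.
move=> hG hS hA; apply: definable_family.
have hcl := definable_forall (definable_imp (definable_preim2 (L \o L) R def_basic)
  (definable_exists (def_inter (definable_preim2 R (L \o R) def_basic)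
                               (definable_preim2 R (L \o (L \o R)) hA)))).
apply: definable_ext (def_inter (definable_preim R hS)
                       (def_inter (definable_preim L hG) hcl)) _ => z.
rewrite closure_basicE; split=> -[Ss [Gz clz]]; do 2!split=> //; move=> t.
  move=> Tt Bt; have [|y] := clz t; first by rewrite !compA pcatL pcatR family_pcat.
  by rewrite !compA !pcatL !pcatR !family_pcat => -[[_ By] [_ Ay]]; exists y.
rewrite !compA !pcatL !pcatR family_pcat => -[Tt Bt].
have [y [By Ay]] := clz t Tt Bt; exists y.
by rewrite !compA !pcatL !pcatR !family_pcat.
Qed.

End Topology.

Section TopologicalGroup.
Variables (M : ordered_group) (D : expansion M) (n k : nat).
Variables (G : rset M n) (mul : pt M n -> pt M n -> pt M n).
Variables (inv : pt M n -> pt M n) (e : pt M n).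
Variables (T : rset M k) (B : pt M k -> rset M n).

Local Notation is_open := (is_open G T B).
Local Notation closure := (Defs.closure G T B).

Hypothesis group : is_group G mul inv e.
Hypothesis basic_subset : forall t, T t -> rsubset (B t) G.
Hypothesis basic_inter : forall t1 t2 x, T t1 -> T t2 -> B t1 x -> B t2 x ->
  exists t3, T t3 /\ B t3 x /\ rsubset (B t3) (fun y => B t1 y /\ B t2 y).
Hypothesis mul_continuous : forall x y, G x -> G y -> forall W, is_open W ->
  W (mul x y) -> exists V1 V2, is_open V1 /\ is_open V2 /\
    V1 x /\ V2 y /\ forall a b, V1 a -> V2 b -> W (mul a b).
Hypothesis inv_continuous : forall x, G x -> forall W, is_open W ->
  W (inv x) -> exists V, is_open V /\ V x /\ forall a, V a -> W (inv a).

Definition conjg (x g : pt M n) := mul (mul (inv g) x) g.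

Lemma mulG x y : G x -> G y -> G (mul x y).
Proof. by case: group => _ [hmul _]; apply: hmul. Qed.

Lemma invG x : G x -> G (inv x).
Proof. by case: group => _ [_ [hinv _]]; apply: hinv. Qed.

Lemma conj1g g : G g -> conjg e g = e.
Proof.
case: group => _ [_ [_ [_ [unit inverse]]]] Gg.
by rewrite /conjg (proj2 (unit _ (invG Gg))) (proj1 (inverse _ Gg)).
Qed.

Lemma conjgK x g : G x -> G g -> mul (mul g (conjg x g)) (inv g) = x.
Proof.
case: group => _ [_ [_ [assoc [unit inverse]]]] Gx Gg; have Gig := invG Gg.
rewrite /conjg (assoc _ _ _ Gg (mulG Gig Gx) Gg) (assoc _ _ _ Gg Gig Gx).
rewrite (proj2 (inverse _ Gg)) (proj1 (unit _ Gx)) -(assoc _ _ _ Gx Gg Gig).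
by rewrite (proj2 (inverse _ Gg)) (proj2 (unit _ Gx)).
Qed.

Lemma conjg_continuous_at1 h W : G h -> is_open W -> W e ->
  exists V V', is_open V /\ is_open V' /\ V h /\ V' e /\
    forall g x, V g -> V' x -> W (conjg x g).
Proof.
move=> Gh oW We; have Gih := invG Gh; have Ge : G e by case: group.
have [|V1 [V2 [oV1 [oV2 [V1he [V2h W12]]]]]] := mul_continuous (mulG Gih Ge) Gh oW.
  by rewrite -/(conjg e h) conj1g.
have [V3 [V' [oV3 [oV' [V3h [V'e V13]]]]]] := mul_continuous Gih Ge oV1 V1he.
have [V4 [oV4 [V4h V34]]] := inv_continuous Gh oV3 V3h.
exists (fun g => V2 g /\ V4 g), V'; split; first exact: is_open_inter.
do 3!split=> //.
by move=> g x [V2g V4g] V'x; apply: W12 => //; apply: V13 => //; apply: V34.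
Qed.

Hypothesis def_G : definable D G.
Hypothesis def_mul : definable D (fun z : pt M ((n + n) + n) =>
  exists x y, G x /\ G y /\ z = pcat (pcat x y) (mul x y)).
Hypothesis def_inv : definable D (fun z : pt M (n + n) =>
  exists x, G x /\ z = pcat x (inv x)).

Lemma definable_map_conjg :
  definable_map D (fun w : pt M (n + n) => G (w \o L) /\ G (w \o R))
                  (fun w => conjg (w \o R) (w \o L)).
Proof.
pose G2 (w : pt M (n + n)) := G (w \o L) /\ G (w \o R).
have G2_pcat x y : G2 (pcat x y) <-> G x /\ G y by rewrite /G2 pcatL pcatR.
have hG2 : definable D G2 :=
  def_inter (definable_preim L def_G) (definable_preim R def_G).
have hmul : definable_map D G2 (fun w => mul (w \o L) (w \o R)).
  apply: definable_ext def_mul _ => z; split.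
    by move=> [x [y [Gx [Gy ->]]]]; exists (pcat x y); rewrite G2_pcat pcatL pcatR.
  by move=> [w [[Gl Gr] ->]]; exists (w \o L), (w \o R); rewrite pcat_split.
have hinv : definable_map D G2 (fun w => inv (w \o L)).
  by apply: definable_map_comp (definable_map_proj L hG2) def_inv _ => w [].
have hmulinv : definable_map D G2 (fun w => mul (inv (w \o L)) (w \o R)).
  apply: definable_map_ext (definable_map_comp
    (definable_map_pair hinv (definable_map_proj R hG2)) hmul _) _.
  - by move=> w [Gl Gr]; rewrite G2_pcat; split=> //; apply: invG.
  - by move=> w _; rewrite pcatL pcatR.
apply: definable_map_ext (definable_map_comp
  (definable_map_pair hmulinv (definable_map_proj L hG2)) hmul _) _.
- by move=> w [Gl Gr]; rewrite G2_pcat; split=> //; apply: mulG => //; apply: invG.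
- by move=> w _; rewrite pcatL pcatR.
Qed.

Variables (U C : rset M n).
Hypothesis def_basic : definable D (family T B).
Hypothesis basic_cover : forall x, G x -> exists t, T t /\ B t x.
Hypothesis def_U : definable D U.
Hypothesis U_nbhd : is_nbhd G T B e U.
Hypothesis def_C : definable D C.
Hypothesis CG : rsubset C G.
Hypothesis C_compact : definably_compact D G T B C.

Definition bad_conj (s : pt M k) : rset M n :=
  fun g => C g /\ exists x, B s x /\ ~ U (conjg x g).

Lemma definable_bad_conj :
  definable D (family (fun s => T s /\ B s e) bad_conj).
Proof.
have hK := definable_map_preim definable_map_conjg (def_compl def_U).
have hS := definable_basic_at def_basic e.
apply: definable_family.
have hbad := definable_exists (def_inter (definable_preim2 R (L \o R) def_basic)
                                         (definable_preim2 (L \o L) R hK)).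
apply: definable_ext (def_inter (definable_preim R hS)
                       (def_inter (definable_preim L def_C) hbad)) _ => z.
split=> -[[Ts Bse] [Cg [x]]].
  rewrite !compA !pcatL !pcatR family_pcat => -[[_ Bx] [_ nU]].
  by do 2!split=> //; exists x.
move=> [Bx nU]; do 2!split=> //; exists x.
rewrite !compA !pcatL !pcatR family_pcat; do 3!split=> //.
  exact: CG.
exact: basic_subset Bx.
Qed.

Lemma exists_basic_conj_subset :
  exists t, T t /\ B t e /\ forall h x, C h -> B t x -> U (conjg x h).
Proof.
apply: NNPP => no_basic.
pose S s := T s /\ B s e.
pose F s h := C h /\ closure (bad_conj s) h.
have def_S : definable D S := definable_basic_at def_basic e.
have S_nonempty : exists s, S s by apply: basic_cover; case: group.
have F_closed_nonempty s : S s -> rel_closed G T B C (F s) /\ exists h, F s h.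
  move=> [Ts Bse]; split; first exact: rel_closed_closure.
  have [h [x [Ch [Bx nU]]]] : exists h x, C h /\ B s x /\ ~ U (conjg x h).
    apply: NNPP => nE; apply: no_basic; exists s; do 2!split=> //.
    by move=> h x Ch Bx; apply: NNPP => nU; apply: nE; exists h, x.
  exists h; split=> //; apply: closure_subset => [g [/CG] // | ].
  by split=> //; exists x.
have F_filtered s1 s2 : S s1 -> S s2 ->
    exists s3, S s3 /\ rsubset (F s3) (fun h => F s1 h /\ F s2 h).
  move=> [T1 B1] [T2 B2]; have [s3 [T3 [B3 sub]]] := basic_inter T1 T2 B1 B2.
  exists s3; split=> // h [Ch clh]; split; split=> //; apply: closureS clh;
    by move=> g [Cg [x [/sub [B1x B2x] nU]]]; split=> //; exists x.
have def_F : definable D (family S F).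
  apply: (definable_family_inter def_C).
  exact (definable_closure_family basic_subset basic_inter def_basic def_G
           def_S definable_bad_conj).
have [h0 [Ch0 Fh0]] :=
  C_compact def_S def_F S_nonempty F_closed_nonempty F_filtered.
case: U_nbhd => _ [U0 [oU0 [U0e U0U]]].
have [V [V' [oV [oV' [Vh0 [V'e VV'U0]]]]]] := conjg_continuous_at1 (CG Ch0) oU0 U0e.
have [t [Tt [Bte BtV']]] := proj2 oV' e V'e.
have [_ [_ clh0]] := Fh0 t (conj Tt Bte).
have [g [Vg [_ [x [Bx nU]]]]] := clh0 V oV Vh0.
by apply: nU; apply: U0U; apply: VV'U0 Vg (BtV' x Bx).
Qed.

End TopologicalGroup.

Theorem lemma5p3 (M : ordered_group) (D : expansion M)
  (hloc : locally_o_minimal D) (hdc : definably_complete D)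
  (n : nat) (G : rset M n) (mul : pt M n -> pt M n -> pt M n)
  (inv : pt M n -> pt M n) (e : pt M n)
  (k : nat) (T : rset M k) (B : pt M k -> rset M n)
  (hGtop : definable_topological_group D G mul inv e T B)
  (hcs : curve_selection D G T B)
  (U : rset M n) (hUdef : definable D U) (hU : is_nbhd G T B e U)
  (C : rset M n) (hCdef : definable D C) (hCG : rsubset C G)
  (hCc : definably_compact D G T B C) :
  is_nbhd G T B e
    (fun x => G x /\ forall h, C h -> exists u, U u /\ x = mul (mul h u) (inv h)).
Proof.
case: hGtop => [[group [def_G [def_mul def_inv]]]
  [[_ [def_basic [basic_subset [basic_cover basic_inter]]]] [mul_cont inv_cont]]].
have [t [Tt [Bte conj_in_U]]] := exists_basic_conj_subset group basic_subset
  basic_inter mul_cont inv_cont def_G def_mul def_inv def_basic basic_cover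
  hUdef hU hCdef hCG hCc.
split=> [x [] // |]; exists (B t); split; first exact: is_open_basic.
split=> // x Bx; have Gx := basic_subset t Tt x Bx; split=> // h Ch.
exists (conjg mul inv x h); split; first exact: conj_in_U.
by rewrite (conjgK group Gx (hCG h Ch)).
Qed.
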